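(* Let $\{f_j\}_{j=1}^m$, $m\ge2$, be an iterated function system of similarities of $\mathbb{C}$ with common contraction ratio $|\lambda|<1$ and connected attractor $A=\bigcup_j A_j$, $A_j=f_j(A)$, which is invertible with map $q:A\to A$ and has finite nonempty overlap set $\mathcal{O}$. Suppose $q$ is critically non-recurrent. Then there exist constants $C\ge1$ and $\delta_1>0$ such that for every connected set $S\subset A$ and every integer $n\ge0$, $$C^{-1}|\lambda|^{-n}\operatorname{diam}S\le\operatorname{diam}q^n(S)\le C|\lambda|^{-n}\operatorname{diam}S,$$ provided either $\operatorname{diam}q^n(S)<\delta_1$ or $|\lambda|^{-n}\operatorname{diam}S<\delta_1$.
   Context: Each $f_j$ is of the form $f_j(z)=|\lambda|e^{i\theta_j}z+d_j$ or $f_j(z)=|\lambda|e^{i\theta_j}\overline{z}+d_j$, and $A$ is the unique nonempty compact set with $A=\bigcup_j f_j(A)$. Invertible means there is a continuous $q:A\to A$ with $q|_{A_j}$ equal to the inverse of $f_j:A\to A_j$ for each $j$. The overlap set is $\mathcal{O}=\bigcup_{i\ne j}(A_i\cap A_j)$. $q$ is critically non-recurrent if for every $z\in\mathcal{O}$ the limit set of $\{q^n(z)\}_{n\ge1}$ does not contain $z$. *)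

From Stdlib Require Import Reals Lra Lia List.
From Coquelicot Require Import Coquelicot.
Open Scope R_scope.

Definition cdist (z w : C) : R := Cmod (Cminus z w).

Definition openC (U : C -> Prop) : Prop :=
  forall z, U z -> exists e, 0 < e /\ forall w, cdist w z < e -> U w.

Definition connectedC (S : C -> Prop) : Prop :=
  forall U V : C -> Prop, openC U -> openC V ->
    (forall z, S z -> U z \/ V z) ->
    (exists z, S z /\ U z) -> (exists z, S z /\ V z) ->
    exists z, S z /\ U z /\ V z.

Definition compactC (A : C -> Prop) : Prop :=
  forall u : nat -> C, (forall n, A (u n)) ->
    exists (phi : nat -> nat) (l : C),
      (forall n, (phi n < phi (S n))%nat) /\ A l /\
      forall e, 0 < e -> exists N, forall n, (N <= n)%nat -> cdist (u (phi n)) l < e.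

(* diameter: supremum of |x - y| over x, y in S (0 for the empty set) *)
Definition diam (S : C -> Prop) : R :=
  real (Lub_Rbar (fun r => exists x y, S x /\ S y /\ r = cdist x y)).

Definition img (g : C -> C) (S : C -> Prop) : C -> Prop :=
  fun w => exists z, S z /\ w = g z.

Definition iterf (n : nat) (g : C -> C) : C -> C := Nat.iter n g.

Definition simil (r th : R) (cj : bool) (d : C) (z : C) : C :=
  Cplus (Cmult (Cmult (RtoC r) (cos th, sin th)) (if cj then Cconj z else z)) d.

Definition ifs_map (r : R) (th : nat -> R) (cj : nat -> bool) (d : nat -> C)
  (j : nat) : C -> C := simil r (th j) (cj j) (d j).

Definition piece (r : R) (th : nat -> R) (cj : nat -> bool) (d : nat -> C)
  (A : C -> Prop) (j : nat) : C -> Prop := img (ifs_map r th cj d j) A.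

(* A is the attractor: nonempty compact with A = \bigcup_{j<m} f_j(A)
   (such a set is unique by Hutchinson's theorem) *)
Definition is_attractor (m : nat) (r : R) (th : nat -> R) (cj : nat -> bool)
  (d : nat -> C) (A : C -> Prop) : Prop :=
  (exists z, A z) /\ compactC A /\
  forall w, A w <-> exists j, (j < m)%nat /\ piece r th cj d A j w.

Definition inverse_map (m : nat) (r : R) (th : nat -> R) (cj : nat -> bool)
  (d : nat -> C) (A : C -> Prop) (q : C -> C) : Prop :=
  (forall z, A z -> A (q z)) /\
  (forall x, A x -> forall e, 0 < e -> exists dl, 0 < dl /\
      forall y, A y -> cdist y x < dl -> cdist (q y) (q x) < e) /\
  (forall j, (j < m)%nat -> forall z, A z -> q (ifs_map r th cj d j z) = z).

Definition overlap (m : nat) (r : R) (th : nat -> R) (cj : nat -> bool)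
  (d : nat -> C) (A : C -> Prop) : C -> Prop :=
  fun z => exists i j, (i < m)%nat /\ (j < m)%nat /\ i <> j /\
    piece r th cj d A i z /\ piece r th cj d A j z.

Definition limit_set (u : nat -> C) : C -> Prop :=
  fun w => forall e, 0 < e -> forall N, exists n, (N <= n)%nat /\ cdist (u n) w < e.

Definition crit_nonrec (O : C -> Prop) (q : C -> C) : Prop :=
  forall z, O z -> ~ limit_set (fun n => iterf (S n) q z) z.

From Stdlib Require Import Reals Lra Lia Arith List Classical ClassicalEpsilon.
From Coquelicot Require Import Coquelicot.
Open Scope R_scope.

(* Away from the overlap set, q inverts a single f_j, a similarity of ratio r,
   so it multiplies the diameter of a small connected set lying in one piece
   exactly by 1/r.  A small connected set meeting an overlap point o lies in the
   pieces containing o, where distances to o are still multiplied by 1/r, so its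
   diameter is distorted by at most a factor 2.  Critical non-recurrence keeps
   the returns of the finitely many overlap points a positive distance away
   from them, so an orbit of small sets meets each overlap point at most once
   and the total distortion is at most 2^#O.  Smallness of the whole orbit
   propagates forward from a small r^-n diam S by this very estimate, and
   backward from a small diam q^n(S) because a connected set with small image
   cannot straddle the gap between an overlap point and the pieces missing it. *)

Lemma cdist_sym z w : cdist z w = cdist w z.
Proof.
  unfold cdist. replace (Cminus z w) with (Copp (Cminus w z)) by ring.
  apply Cmod_opp.
Qed.

Lemma cdist_triangle x y z : cdist x z <= cdist x y + cdist y z.
Proof.
  unfold cdist. replace (Cminus x z) with (Cplus (Cminus x y) (Cminus y z)) by ring.
  apply Cmod_triangle.
Qed.

Lemma cdist_ge0 x y : 0 <= cdist x y.
Proof. apply Cmod_ge_0. Qed.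

Lemma cdist_xx x : cdist x x = 0.
Proof. unfold cdist. replace (Cminus x x) with (RtoC 0) by ring. apply Cmod_0. Qed.

Lemma cdist_eq0 x y : cdist x y = 0 -> x = y.
Proof.
  unfold cdist. intro H. apply Cmod_eq_0 in H.
  replace x with (Cplus (Cminus x y) y) by ring. rewrite H. ring.
Qed.

Lemma Cmod_cos_sin th : Cmod (cos th, sin th) = 1.
Proof.
  unfold Cmod; simpl. pose proof (sin2_cos2 th) as H. unfold Rsqr in H.
  replace (cos th * (cos th * 1) + sin th * (sin th * 1)) with 1 by nra.
  apply sqrt_1.
Qed.

Lemma cdist_simil r th cj d a b : 0 < r ->
  cdist (simil r th cj d a) (simil r th cj d b) = r * cdist a b.
Proof.
  intro Hr. unfold cdist, simil.
  set (u := Cmult (RtoC r) (cos th, sin th)).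
  replace (Cminus (Cplus (Cmult u (if cj then Cconj a else a)) d)
                  (Cplus (Cmult u (if cj then Cconj b else b)) d))
    with (Cmult u (Cminus (if cj then Cconj a else a) (if cj then Cconj b else b))) by ring.
  rewrite Cmod_mult. unfold u.
  rewrite Cmod_mult, Cmod_cos_sin, Cmod_R, Rabs_pos_eq by lra.
  destruct cj; [rewrite <- Cminus_conj, Cmod_conj|]; ring.
Qed.

Lemma ex_uniform_eps_In {X : Type} (P : R -> X -> Prop) (l : list X) :
  (forall e e' x, 0 < e' -> e' <= e -> P e x -> P e' x) ->
  (forall x, In x l -> exists e, 0 < e /\ P e x) ->
  exists e, 0 < e /\ forall x, In x l -> P e x.
Proof.
  intros Hmono. induction l as [|a l IH]; intro Hl.
  - exists 1. split; [lra|]. intros x [].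
  - destruct (Hl a (or_introl eq_refl)) as [e1 [He1 P1]].
    destruct IH as [e2 [He2 P2]]; [intros x Hx; apply Hl; right; exact Hx|].
    exists (Rmin e1 e2). split; [apply Rmin_case; lra|].
    intros x [<-|Hx].
    + apply (Hmono e1); auto; [apply Rmin_case; lra | apply Rmin_l].
    + apply (Hmono e2); auto; [apply Rmin_case; lra | apply Rmin_r].
Qed.

Lemma ex_uniform_eps_lt (P : R -> nat -> Prop) (n : nat) :
  (forall e e' k, 0 < e' -> e' <= e -> P e k -> P e' k) ->
  (forall k, (k < n)%nat -> exists e, 0 < e /\ P e k) ->
  exists e, 0 < e /\ forall k, (k < n)%nat -> P e k.
Proof.
  intros Hmono H. destruct (ex_uniform_eps_In P (seq 0 n) Hmono) as [e [He HP]].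
  - intros k Hk. apply in_seq in Hk. apply H. lia.
  - exists e. split; auto. intros k Hk. apply HP, in_seq. lia.
Qed.

Definition count_sat {X : Type} (P : X -> Prop) (l : list X) : nat :=
  length (filter (fun x => if excluded_middle_informative (P x) then true else false) l).

Lemma count_sat_le_length {X : Type} (P : X -> Prop) (l : list X) :
  (count_sat P l <= length l)%nat.
Proof. apply filter_length_le. Qed.

Lemma count_sat_mono {X : Type} (P P' : X -> Prop) (l : list X) :
  (forall x, P x -> P' x) -> (count_sat P l <= count_sat P' l)%nat.
Proof.
  intro H. unfold count_sat. induction l as [|a l IH]; simpl; [lia|].
  destruct (excluded_middle_informative (P a));
    destruct (excluded_middle_informative (P' a)); simpl; try lia.
  exfalso; auto.
Qed.

Lemma count_sat_lt {X : Type} (P P' : X -> Prop) (l : list X) y :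
  (forall x, P x -> P' x) -> In y l -> P' y -> ~ P y ->
  (count_sat P l < count_sat P' l)%nat.
Proof.
  intros H Hy HP' HP. induction l as [|a l IH]; [destruct Hy|].
  pose proof (count_sat_mono P P' l H) as Hle. unfold count_sat in *; simpl.
  destruct Hy as [->|Hy].
  - destruct (excluded_middle_informative (P y)); [contradiction|].
    destruct (excluded_middle_informative (P' y)); [|contradiction]. simpl. lia.
  - specialize (IH Hy).
    destruct (excluded_middle_informative (P a));
      destruct (excluded_middle_informative (P' a)); simpl; try lia.
    exfalso; auto.
Qed.

Lemma cdist_le_diam (B : R) (T : C -> Prop) x y :
  (forall u v, T u -> T v -> cdist u v <= B) ->
  T x -> T y -> cdist x y <= diam T.
Proof.
  intros HB Hx Hy. unfold diam.
  destruct (Lub_Rbar_correct (fun r => exists x y, T x /\ T y /\ r = cdist x y)) as [Hub Hlub].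
  assert (H1 : Rbar_le (cdist x y) (Lub_Rbar (fun r => exists x y, T x /\ T y /\ r = cdist x y)))
    by (apply Hub; exists x, y; auto).
  assert (H2 : Rbar_le (Lub_Rbar (fun r => exists x y, T x /\ T y /\ r = cdist x y)) B)
    by (apply Hlub; intros r [u [v [Hu [Hv ->]]]]; apply HB; auto).
  destruct (Lub_Rbar _); simpl in *; tauto.
Qed.

Lemma diam_le (T : C -> Prop) M : 0 <= M ->
  (forall u v, T u -> T v -> cdist u v <= M) -> diam T <= M.
Proof.
  intros HM HB. unfold diam.
  destruct (Lub_Rbar_correct (fun r => exists x y, T x /\ T y /\ r = cdist x y)) as [_ Hlub].
  assert (H : Rbar_le (Lub_Rbar (fun r => exists x y, T x /\ T y /\ r = cdist x y)) M)
    by (apply Hlub; intros r [u [v [Hu [Hv ->]]]]; apply HB; auto).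
  destruct (Lub_Rbar _); simpl in *; tauto.
Qed.

(* For empty [T] the supremum is [m_infty], whose [real] part is [0]. *)
Lemma diam_ge0 (B : R) (T : C -> Prop) :
  (forall u v, T u -> T v -> cdist u v <= B) -> 0 <= diam T.
Proof.
  intros HB. destruct (classic (exists x, T x)) as [[x Hx]|Hempty].
  - rewrite <- (cdist_xx x). apply (cdist_le_diam B); auto.
  - unfold diam.
    destruct (Lub_Rbar_correct (fun r => exists x y, T x /\ T y /\ r = cdist x y)) as [_ Hlub].
    assert (Hall : forall b : R,
      Rbar_le (Lub_Rbar (fun r => exists x y, T x /\ T y /\ r = cdist x y)) b)
      by (intro b; apply Hlub; intros r [u [v [Hu _]]]; exfalso; eauto).
    destruct (Lub_Rbar _) as [v| |]; simpl.
    + specialize (Hall (v - 1)). simpl in Hall. lra.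
    + specialize (Hall 0). simpl in Hall. tauto.
    + lra.
Qed.

Lemma diam_ext (T T' : C -> Prop) : (forall z, T z <-> T' z) -> diam T = diam T'.
Proof.
  intro H. unfold diam. f_equal. apply Lub_Rbar_eqset.
  intro r. split; intros [x [y [Hx [Hy ->]]]]; exists x, y; repeat split; auto; apply H; auto.
Qed.

Definition closedC (F : C -> Prop) : Prop :=
  forall z, ~ F z -> exists e, 0 < e /\ forall w, cdist w z < e -> ~ F w.

Lemma closedC_union_lt (F : nat -> C -> Prop) (n : nat) :
  (forall k, (k < n)%nat -> closedC (F k)) ->
  closedC (fun z => exists k, (k < n)%nat /\ F k z).
Proof.
  intros HF z Hz.
  destruct (ex_uniform_eps_lt (fun e k => forall w, cdist w z < e -> ~ F k w) n)
    as [e [He H]].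
  - intros e e' k He' Hle H w Hw. apply H. lra.
  - intros k Hk. apply HF; auto. intro Hkz. apply Hz. eauto.
  - exists e. split; auto. intros w Hw [k [Hk Hkw]]. exact (H k Hk w Hw Hkw).
Qed.

Lemma openC_dist_lt c e : openC (fun w => cdist w c < e).
Proof.
  intros z Hz. exists (e - cdist z c). split; [lra|].
  intros w Hw. pose proof (cdist_triangle w z c). lra.
Qed.

Lemma openC_dist_gt c e : openC (fun w => e < cdist w c).
Proof.
  intros z Hz. exists (cdist z c - e). split; [lra|].
  intros w Hw. rewrite cdist_sym in Hw. pose proof (cdist_triangle z w c). lra.
Qed.

Lemma connectedC_closed (T F1 F2 : C -> Prop) :
  connectedC T -> closedC F1 -> closedC F2 ->
  (forall z, T z -> F1 z \/ F2 z) ->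
  (exists z, T z /\ F1 z) -> (exists z, T z /\ F2 z) ->
  exists z, T z /\ F1 z /\ F2 z.
Proof.
  intros HT C1 C2 Hcov [x [Tx F1x]] [y [Ty F2y]].
  apply NNPP. intro Hno.
  assert (Hdisj : forall z, T z -> F1 z -> ~ F2 z) by (intros z a b c; apply Hno; eauto).
  destruct (HT (fun z => ~ F2 z) (fun z => ~ F1 z)) as [z [Tz [U V]]].
  - intros z Hz. destruct (C2 z Hz) as [e [He H]]. eauto.
  - intros z Hz. destruct (C1 z Hz) as [e [He H]]. eauto.
  - intros z Tz. destruct (Hcov z Tz) as [H|H]; [left | right]; intro H'.
    + exact (Hdisj z Tz H H').
    + exact (Hdisj z Tz H' H).
  - exists x. split; auto.
  - exists y. split; auto. intro H. exact (Hdisj y Ty H F2y).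
  - cbv beta in *. destruct (Hcov z Tz); tauto.
Qed.

Lemma connectedC_dist_gap (T : C -> Prop) o a b :
  connectedC T -> T o -> 0 <= a -> a < b ->
  (forall z, T z -> cdist z o <= a \/ b <= cdist z o) ->
  forall z, T z -> cdist z o <= a.
Proof.
  intros HT To Ha Hab Hgap z Tz. apply NNPP. intro Hfar.
  destruct (HT (fun w => cdist w o < (a + b) / 2) (fun w => (a + b) / 2 < cdist w o)
    (openC_dist_lt o _) (openC_dist_gt o _)) as [w [_ [H1 H2]]].
  - intros w Tw. destruct (Hgap w Tw); [left|right]; lra.
  - exists o. rewrite cdist_xx. split; auto. lra.
  - exists z. split; auto. destruct (Hgap z Tz); lra.
  - lra.
Qed.

Lemma connectedC_ext (T T' : C -> Prop) :
  (forall z, T z <-> T' z) -> connectedC T -> connectedC T'.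
Proof.
  intros H HT U V HU HV Hcov [x [Tx Ux]] [y [Ty Vy]].
  destruct (HT U V HU HV) as [z [Tz Hz]].
  - intros z Tz. apply Hcov, H, Tz.
  - exists x. split; [apply H|]; auto.
  - exists y. split; [apply H|]; auto.
  - exists z. split; [apply H|]; auto.
Qed.

Definition continuous_onC (A : C -> Prop) (g : C -> C) : Prop :=
  forall x, A x -> forall e, 0 < e -> exists dl, 0 < dl /\
    forall y, A y -> cdist y x < dl -> cdist (g y) (g x) < e.

Lemma connectedC_img (A T : C -> Prop) (g : C -> C) :
  continuous_onC A g -> (forall z, T z -> A z) -> connectedC T -> connectedC (img g T).
Proof.
  intros Hg HTA HT U V HU HV Hcov [x [[x0 [Hx0 ->]] Ux]] [y [[y0 [Hy0 ->]] Vy]].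
  (* preimages of open sets, thickened to open subsets of C *)
  set (pre := fun W : C -> Prop => fun z =>
    exists e, 0 < e /\ forall w, A w -> cdist w z < e -> W (g w)).
  assert (Hpre_open : forall W, openC (pre W)).
  { intros W z [e [He H]]. exists (e / 2). split; [lra|]. intros z' Hz'.
    exists (e / 2). split; [lra|]. intros w Hw Hwz. apply H; auto.
    pose proof (cdist_triangle w z' z). lra. }
  assert (Hpre : forall W, openC W -> forall z, A z -> W (g z) -> pre W z).
  { intros W HW z Hz Hw. destruct (HW _ Hw) as [e [He H]].
    destruct (Hg z Hz e He) as [dl [Hdl H2]].
    exists dl. split; auto. }
  destruct (HT (pre U) (pre V) (Hpre_open U) (Hpre_open V))
    as [z [Tz [[e1 [He1 H1]] [e2 [He2 H2]]]]].
  - intros z Tz. destruct (Hcov (g z)) as [H|H]; [exists z; auto | |].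
    + left. apply Hpre; auto.
    + right. apply Hpre; auto.
  - exists x0. split; auto.
  - exists y0. split; auto.
  - exists (g z). split; [exists z; auto|].
    split; [apply H1 | apply H2]; auto; rewrite cdist_xx; auto.
Qed.

Lemma nat_incr_ge_id (phi : nat -> nat) :
  (forall n, (phi n < phi (S n))%nat) -> forall n, (n <= phi n)%nat.
Proof. intros H n. induction n; [lia|]. specialize (H n). lia. Qed.

Lemma compactC_bounded (A : C -> Prop) :
  compactC A -> exists B, forall u v, A u -> A v -> cdist u v <= B.
Proof.
  intro HA. destruct (classic (exists x0, A x0)) as [[x0 Hx0]|Hempty].
  2:{ exists 0. intros u v Hu. exfalso. eauto. }
  assert (Hb : exists B, forall u, A u -> cdist u x0 <= B).
  { apply NNPP. intro Hunb.
    assert (Hfar : forall n : nat, exists x, A x /\ INR n < cdist x x0).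
    { intro n. apply NNPP. intro H1. apply Hunb. exists (INR n). intros u Hu.
      apply Rnot_lt_le. intro H2. apply H1. eauto. }
    destruct (choice _ Hfar) as [u Hu].
    destruct (HA u (fun n => proj1 (Hu n))) as [phi [a [Hphi [_ Hconv]]]].
    destruct (Hconv 1 Rlt_0_1) as [N HN].
    destruct (INR_archimed 1 (1 + cdist a x0)) as [k Hk]; [lra|].
    set (n := Nat.max N k).
    specialize (HN n (Nat.le_max_l _ _)).
    pose proof (proj2 (Hu (phi n))).
    assert (INR k <= INR (phi n))
      by (apply le_INR; pose proof (nat_incr_ge_id phi Hphi n); unfold n in *; lia).
    pose proof (cdist_triangle (u (phi n)) a x0). lra. }
  destruct Hb as [B HB]. exists (2 * B). intros u v Hu Hv.
  pose proof (cdist_triangle u x0 v). rewrite (cdist_sym x0 v) in H.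
  pose proof (HB u Hu). pose proof (HB v Hv). lra.
Qed.

Lemma compactC_img_closed (A : C -> Prop) (g : C -> C) (K : R) :
  compactC A -> 0 <= K -> (forall a b, cdist (g a) (g b) <= K * cdist a b) ->
  closedC (img g A).
Proof.
  intros HA HK Hg z Hz. apply NNPP. intro Hadh.
  assert (Hnear : forall n : nat, exists a, A a /\ cdist (g a) z < / INR (S n)).
  { intro n. apply NNPP. intro Hn. apply Hadh. exists (/ INR (S n)). split.
    - apply Rinv_0_lt_compat, lt_0_INR. lia.
    - intros w Hw [a [Ha ->]]. apply Hn. eauto. }
  destruct (choice _ Hnear) as [u Hu].
  destruct (HA u (fun n => proj1 (Hu n))) as [phi [a [Hphi [Ha Hconv]]]].
  apply Hz. exists a. split; auto. symmetry. apply cdist_eq0. apply NNPP. intro Hne.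
  assert (Hc : 0 < cdist (g a) z) by (pose proof (cdist_ge0 (g a) z); lra).
  set (c := cdist (g a) z) in *.
  destruct (Hconv (c / (2 * (K + 1)))) as [N HN]; [apply Rdiv_lt_0_compat; lra|].
  destruct (archimed_cor1 (c / 2)) as [N0 [HN0 HN0pos]]; [lra|].
  set (n := Nat.max N N0).
  specialize (HN n (Nat.le_max_l _ _)). rewrite cdist_sym in HN.
  pose proof (proj2 (Hu (phi n))) as Hun.
  assert (/ INR (S (phi n)) <= / INR N0).
  { apply Rinv_le_contravar; [apply lt_0_INR; lia|]. apply le_INR.
    pose proof (nat_incr_ge_id phi Hphi n). unfold n in *. lia. }
  assert (K * cdist a (u (phi n)) <= (K + 1) * (c / (2 * (K + 1)))).
  { pose proof (cdist_ge0 a (u (phi n))). nra. }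
  replace ((K + 1) * (c / (2 * (K + 1)))) with (c / 2) in H0 by (field; lra).
  pose proof (cdist_triangle (g a) (g (u (phi n))) z).
  pose proof (Hg a (u (phi n))). unfold c in *. lra.
Qed.

Lemma img_incl (A T : C -> Prop) (g : C -> C) :
  (forall z, A z -> A (g z)) -> (forall z, T z -> A z) -> forall z, img g T z -> A z.
Proof. intros Hg HT z [w [Hw ->]]. auto. Qed.

Lemma img_iterf_O (g : C -> C) T z : img (iterf 0 g) T z <-> T z.
Proof. split; [intros [w [Hw ->]]; auto | intro Hz; exists z; auto]. Qed.

Lemma img_iterf_S (g : C -> C) T k z :
  img (iterf (S k) g) T z <-> img g (img (iterf k g) T) z.
Proof.
  split.
  - intros [w [Hw ->]]. exists (iterf k g w). split; [exists w|]; auto.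
  - intros [w [[u [Hu ->]] ->]]. exists u. auto.
Qed.

Lemma img_iterf_add (g : C -> C) T i j z :
  img (iterf i g) (img (iterf j g) T) z <-> img (iterf (i + j) g) T z.
Proof.
  unfold iterf. split.
  - intros [w [[u [Hu ->]] ->]]. exists u. rewrite Nat.iter_add. auto.
  - intros [u [Hu ->]]. exists (Nat.iter j g u). rewrite Nat.iter_add.
    split; [exists u|]; auto.
Qed.

Lemma img_iterf_incl (A T : C -> Prop) (g : C -> C) :
  (forall z, A z -> A (g z)) -> (forall z, T z -> A z) ->
  forall k z, img (iterf k g) T z -> A z.
Proof.
  intros Hg HT k. induction k as [|k IH]; intros z Hz.
  - apply HT, (proj1 (img_iterf_O g T z)), Hz.
  - apply img_iterf_S in Hz. exact (img_incl A _ g Hg IH z Hz).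
Qed.

Lemma connectedC_img_iterf (A T : C -> Prop) (g : C -> C) :
  (forall z, A z -> A (g z)) -> continuous_onC A g ->
  (forall z, T z -> A z) -> connectedC T -> forall k, connectedC (img (iterf k g) T).
Proof.
  intros HgA Hg HTA HT k. induction k as [|k IH].
  - apply (connectedC_ext T); auto. intro z. symmetry. apply img_iterf_O.
  - apply (connectedC_ext (img g (img (iterf k g) T))).
    + intro z. symmetry. apply img_iterf_S.
    + apply (connectedC_img A); auto. exact (img_iterf_incl A T g HgA HTA k).
Qed.

Lemma limit_set_periodic (g : C -> C) o k :
  (1 <= k)%nat -> iterf k g o = o -> limit_set (fun n => iterf (S n) g o) o.
Proof.
  intros Hk Hper.
  assert (Hmul : forall t, iterf (t * k) g o = o).
  { induction t as [|t IH]; [reflexivity|]. simpl. unfold iterf in *.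
    rewrite Nat.iter_add, IH. exact Hper. }
  intros e He N. exists (S N * k - 1)%nat. split; [nia|].
  replace (S (S N * k - 1)) with (S N * k)%nat by nia.
  rewrite Hmul, cdist_xx. auto.
Qed.

Lemma ratio_bounds_div r a x y : 0 < r ->
  x <= a * (r * y) -> r * y <= a * x -> x * / r <= a * y /\ y <= a * / r * x.
Proof.
  intros Hr H1 H2. assert (Hrr : r * / r = 1) by (field; lra).
  assert (Hir : 0 < / r) by (apply Rinv_0_lt_compat; lra).
  split.
  - replace (a * y) with (a * (r * y) * / r) by (field; lra).
    apply Rmult_le_compat_r; lra.
  - replace y with (r * y * / r) by (field; lra).
    replace (a * / r * x) with (a * x * / r) by ring.
    apply Rmult_le_compat_r; lra.
Qed.

Lemma pow2_distortion (s : nat -> R) (c : nat -> nat) (rho : R) (n : nat) :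
  0 <= rho -> (forall k, 0 <= s k) ->
  (forall k, (k < n)%nat -> exists b, (c k + b <= c (S k))%nat /\
     s k * rho <= 2 ^ b * s (S k) /\ s (S k) <= 2 ^ b * rho * s k) ->
  s 0%nat * rho ^ n <= 2 ^ c n * s n /\ s n <= 2 ^ c n * rho ^ n * s 0%nat.
Proof.
  intros Hrho Hs. induction n as [|k IH]; intro Hstep.
  - simpl. pose proof (pow_R1_Rle 2 (c 0%nat)). pose proof (Hs 0%nat). split; nra.
  - destruct IH as [IH1 IH2]; [intros; apply Hstep; lia|].
    destruct (Hstep k (Nat.lt_succ_diag_r k)) as [b [Hc [H1 H2]]].
    assert (Hpow : 2 ^ c k * 2 ^ b <= 2 ^ c (S k))
      by (rewrite <- pow_add; apply Rle_pow; [lra | exact Hc]).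
    pose proof (pow_le rho k Hrho). pose proof (pow_lt 2 (c k)).
    pose proof (pow_lt 2 b). pose proof (Hs k). pose proof (Hs (S k)). pose proof (Hs 0%nat).
    simpl. split.
    + apply Rle_trans with (2 ^ c k * (s k * rho)); [nra|].
      apply Rle_trans with (2 ^ c k * 2 ^ b * s (S k)); nra.
    + apply Rle_trans with (2 ^ b * rho * s k); auto.
      apply Rle_trans with (2 ^ b * rho * (2 ^ c k * rho ^ k * s 0%nat)).
      { apply Rmult_le_compat_l; [apply Rmult_le_pos|]; lra. }
      assert (0 <= rho * (rho ^ k * s 0%nat)) by (apply Rmult_le_pos; nra). nra.
Qed.

Section IFS.

Variables (m : nat) (r : R) (th : nat -> R) (cj : nat -> bool) (d : nat -> C)
  (A : C -> Prop) (q : C -> C) (l : list C).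
Hypothesis Hm : (2 <= m)%nat.
Hypothesis Hr0 : 0 < r.
Hypothesis Hr1 : r < 1.
Hypothesis Hatt : is_attractor m r th cj d A.
Hypothesis Hinv : inverse_map m r th cj d A q.
Hypothesis Hl : forall z, overlap m r th cj d A z <-> In z l.
Hypothesis Hcnr : crit_nonrec (overlap m r th cj d A) q.

Local Notation f := (ifs_map r th cj d).
Local Notation P := (piece r th cj d A).
Local Notation O := (overlap m r th cj d A).

Lemma attractor_cover z : A z -> exists j, (j < m)%nat /\ P j z.
Proof. apply Hatt. Qed.

Lemma piece_incl j z : (j < m)%nat -> P j z -> A z.
Proof. intros Hj H. apply Hatt. eauto. Qed.

Lemma q_maps_attractor z : A z -> A (q z).
Proof. apply Hinv. Qed.

Lemma q_continuous : continuous_onC A q.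
Proof. exact (proj1 (proj2 Hinv)). Qed.

Lemma diam_ge0_sub T : (forall z, T z -> A z) -> 0 <= diam T.
Proof.
  intro HT. destruct (compactC_bounded A (proj1 (proj2 Hatt))) as [B HB].
  apply (diam_ge0 B). auto.
Qed.

Lemma cdist_le_diam_sub T x y : (forall z, T z -> A z) -> T x -> T y -> cdist x y <= diam T.
Proof.
  intro HT. destruct (compactC_bounded A (proj1 (proj2 Hatt))) as [B HB].
  apply (cdist_le_diam B). auto.
Qed.

Lemma piece_cdist_q j z w : (j < m)%nat -> P j z -> P j w ->
  cdist z w = r * cdist (q z) (q w).
Proof.
  intros Hj [a [Ha ->]] [b [Hb ->]].
  assert (Hqf : forall c, A c -> q (f j c) = c) by (intros; apply Hinv; auto).
  rewrite !Hqf by auto. apply cdist_simil, Hr0.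
Qed.

Lemma piece_closed j : closedC (P j).
Proof.
  apply (compactC_img_closed A (f j) r); [apply Hatt | lra |].
  intros a b. unfold ifs_map. rewrite cdist_simil by exact Hr0. lra.
Qed.

Lemma overlap_piece_gap : exists e0, 0 < e0 /\
  forall o, O o -> forall j, (j < m)%nat -> forall z, P j z -> cdist z o < e0 -> P j o.
Proof.
  destruct (ex_uniform_eps_In (fun e o => forall j, (j < m)%nat ->
      forall z, P j z -> cdist z o < e -> P j o) l) as [e [He H]].
  - intros e e' o _ Hle H j Hj z Hz Hd. apply (H j Hj z Hz). lra.
  - intros o _.
    apply (ex_uniform_eps_lt (fun e j => forall z, P j z -> cdist z o < e -> P j o)).
    + intros e e' j _ Hle H z Hz Hd. apply (H z Hz). lra.
    + intros j Hj. destruct (classic (P j o)) as [Hp|Hp].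
      * exists 1. split; [lra|]. auto.
      * destruct (piece_closed j o Hp) as [e [He H]]. exists e. split; auto.
        intros z Hz Hd. exfalso. exact (H z Hd Hz).
  - exists e. split; auto. intros o Ho. apply H, Hl, Ho.
Qed.

Lemma connected_in_piece_or_overlap T : (forall z, T z -> A z) -> connectedC T ->
  (exists i, (i < m)%nat /\ forall z, T z -> P i z) \/ (exists o, O o /\ T o).
Proof.
  intros HTA HT. destruct (classic (exists x, T x)) as [[x Tx]|Hempty].
  2:{ left. exists 0%nat. split; [lia|]. intros z Tz. exfalso. eauto. }
  destruct (attractor_cover x (HTA x Tx)) as [i [Hi Hix]].
  destruct (classic (forall z, T z -> P i z)) as [Hall|Hnall]; [left; eauto | right].
  apply not_all_ex_not in Hnall. destruct Hnall as [y Hy].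
  apply imply_to_and in Hy. destruct Hy as [Ty Hyi].
  destruct (connectedC_closed T (P i) (fun z => exists k, (k < m)%nat /\ k <> i /\ P k z)
    HT (piece_closed i)) as [w [Tw [Hwi [k [Hk [Hki Hwk]]]]]].
  - apply (closedC_union_lt (fun k z => k <> i /\ P k z)). intros k Hk z Hz.
    destruct (Nat.eq_dec k i) as [->|Hki].
    + exists 1. split; [lra|]. tauto.
    + destruct (piece_closed k z) as [e [He H]]; [tauto|].
      exists e. split; auto. intros w Hw [_ Hwk]. exact (H w Hw Hwk).
  - intros z Tz. destruct (attractor_cover z (HTA z Tz)) as [k [Hk Hkz]].
    destruct (Nat.eq_dec k i) as [->|Hki]; [left | right; exists k]; auto.
  - eauto.
  - destruct (attractor_cover y (HTA y Ty)) as [k [Hk Hky]].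
    exists y. split; auto. exists k. repeat split; auto. intros ->. auto.
  - exists w. split; auto. exists i, k. auto.
Qed.

Lemma overlap_return_gap : exists dr, 0 < dr /\
  forall o, O o -> forall k, (1 <= k)%nat -> dr <= cdist (iterf k q o) o.
Proof.
  destruct (ex_uniform_eps_In (fun e o => forall k, (1 <= k)%nat ->
      e <= cdist (iterf k q o) o) l) as [e [He H]].
  - intros e e' o _ Hle H k Hk. specialize (H k Hk). lra.
  - intros o Ho. apply Hl in Ho. pose proof (Hcnr o Ho) as Hnot. unfold limit_set in Hnot.
    apply not_all_ex_not in Hnot. destruct Hnot as [e Hnot].
    apply imply_to_and in Hnot. destruct Hnot as [He Hnot].
    apply not_all_ex_not in Hnot. destruct Hnot as [N Hnot].
    assert (Hlate : forall n, (N <= n)%nat -> e <= cdist (iterf (S n) q o) o)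
      by (intros n Hn; apply Rnot_lt_le; intro H1; apply Hnot; eauto).
    (* the finitely many early returns are positive since [o] is not periodic *)
    destruct (ex_uniform_eps_lt (fun e k => (1 <= k)%nat -> e <= cdist (iterf k q o) o) (S N))
      as [e' [He' Hearly]].
    + intros a b k _ Hle H1 H2. specialize (H1 H2). lra.
    + intros k Hk. destruct k as [|k].
      * exists 1. split; [lra | lia].
      * exists (cdist (iterf (S k) q o) o). split; [|intros; lra].
        destruct (cdist_ge0 (iterf (S k) q o) o) as [Hpos|Hzero]; auto.
        exfalso. apply (Hcnr o Ho), (limit_set_periodic q o (S k)); [lia|].
        apply cdist_eq0. auto.
    + exists (Rmin e e'). split; [apply Rmin_case; lra|].
      intros k Hk. destruct (Compare_dec.le_lt_dec (S N) k) as [HNk|HkN].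
      * destruct k as [|k]; [lia|]. specialize (Hlate k ltac:(lia)).
        pose proof (Rmin_l e e'). lra.
      * specialize (Hearly k HkN Hk). pose proof (Rmin_r e e'). lra.
  - exists e. split; auto. intros o Ho. apply H, Hl, Ho.
Qed.

Section Gap.

Variable e0 : R.
Hypothesis He0 : 0 < e0.
Hypothesis He0P : forall o, O o -> forall j, (j < m)%nat ->
  forall z, P j z -> cdist z o < e0 -> P j o.

Lemma cdist_q_near_overlap o z : O o -> A z -> cdist z o < e0 ->
  cdist z o = r * cdist (q z) (q o).
Proof.
  intros Ho Hz Hd. destruct (attractor_cover z Hz) as [j [Hj Hjz]].
  apply (piece_cdist_q j); auto. eapply He0P; eauto.
Qed.

Lemma diam_q_in_piece T i : (i < m)%nat -> (forall z, T z -> P i z) ->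
  diam T = r * diam (img q T).
Proof.
  intros Hi HT.
  assert (TA : forall z, T z -> A z) by (intros; eapply piece_incl; eauto).
  assert (QA := img_incl A T q q_maps_attractor TA).
  pose proof (diam_ge0_sub T TA). pose proof (diam_ge0_sub _ QA).
  apply Rle_antisym.
  - apply diam_le; [nra|]. intros u v Hu Hv. rewrite (piece_cdist_q i u v); auto.
    apply Rmult_le_compat_l; [lra|].
    apply cdist_le_diam_sub; auto; [exists u | exists v]; auto.
  - enough (diam (img q T) <= diam T / r).
    { apply (Rmult_le_compat_l r) in H1; [|lra].
      replace (r * (diam T / r)) with (diam T) in H1 by (field; lra). exact H1. }
    apply diam_le; [apply Rdiv_le_0_compat; lra|].
    intros u' v' [u [Hu ->]] [v [Hv ->]].
    pose proof (piece_cdist_q i u v Hi (HT u Hu) (HT v Hv)).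
    pose proof (cdist_le_diam_sub T u v TA Hu Hv).
    apply Rmult_le_reg_l with r; [lra|].
    replace (r * (diam T / r)) with (diam T) by (field; lra). lra.
Qed.

Lemma diam_q_near_overlap T o : O o -> T o -> (forall z, T z -> A z) ->
  (forall z, T z -> cdist z o < e0) ->
  diam T <= 2 * (r * diam (img q T)) /\ r * diam (img q T) <= 2 * diam T.
Proof.
  intros Ho To TA Hnear.
  assert (QA := img_incl A T q q_maps_attractor TA).
  pose proof (diam_ge0_sub T TA). pose proof (diam_ge0_sub _ QA).
  assert (Hqo : img q T (q o)) by (exists o; auto).
  assert (Hfar : forall z, T z -> cdist (q z) (q o) <= diam (img q T))
    by (intros z Tz; apply cdist_le_diam_sub; auto; exists z; auto).
  split.
  - apply diam_le; [nra|]. intros u v Hu Hv.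
    pose proof (cdist_triangle u o v). rewrite (cdist_sym o v) in H1.
    rewrite (cdist_q_near_overlap o u), (cdist_q_near_overlap o v) in H1; auto.
    pose proof (Hfar u Hu). pose proof (Hfar v Hv). nra.
  - enough (diam (img q T) <= 2 * diam T / r).
    { apply (Rmult_le_compat_l r) in H1; [|lra].
      replace (r * (2 * diam T / r)) with (2 * diam T) in H1 by (field; lra). exact H1. }
    apply diam_le; [apply Rdiv_le_0_compat; lra|].
    intros u' v' [u [Hu ->]] [v [Hv ->]].
    pose proof (cdist_triangle (q u) (q o) (q v)). rewrite (cdist_sym (q o) (q v)) in H1.
    pose proof (cdist_q_near_overlap o u Ho (TA u Hu) (Hnear u Hu)).
    pose proof (cdist_q_near_overlap o v Ho (TA v Hv) (Hnear v Hv)).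
    pose proof (cdist_le_diam_sub T u o TA Hu To).
    pose proof (cdist_le_diam_sub T v o TA Hv To).
    apply Rmult_le_reg_l with r; [lra|].
    replace (r * (2 * diam T / r)) with (2 * diam T) by (field; lra). nra.
Qed.

Lemma diam_q_step T : (forall z, T z -> A z) -> connectedC T -> diam T < e0 ->
  diam T = r * diam (img q T) \/
  exists o, O o /\ T o /\
    diam T <= 2 * (r * diam (img q T)) /\ r * diam (img q T) <= 2 * diam T.
Proof.
  intros TA HT Hd.
  destruct (connected_in_piece_or_overlap T TA HT) as [[i [Hi Hall]]|[o [Ho To]]].
  - left. apply (diam_q_in_piece T i); auto.
  - right. exists o. repeat split; auto; apply (diam_q_near_overlap T o); auto;
      intros z Tz; pose proof (cdist_le_diam_sub T z o TA Tz To); lra.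
Qed.

(* A connected set with small image cannot straddle the gap around an overlap point. *)
Lemma diam_le_of_small_q_image T : (forall z, T z -> A z) -> connectedC T ->
  r * diam (img q T) < e0 / 2 -> diam T <= 2 * (r * diam (img q T)).
Proof.
  intros TA HT Hsmall.
  assert (QA := img_incl A T q q_maps_attractor TA).
  pose proof (diam_ge0_sub T TA). pose proof (diam_ge0_sub _ QA).
  destruct (connected_in_piece_or_overlap T TA HT) as [[i [Hi Hall]]|[o [Ho To]]].
  - rewrite (diam_q_in_piece T i Hi Hall).
    assert (0 <= r * diam (img q T)) by (apply Rmult_le_pos; lra). lra.
  - assert (Hgap : forall z, T z ->
        cdist z o <= r * diam (img q T) \/ e0 <= cdist z o).
    { intros z Tz. destruct (attractor_cover z (TA z Tz)) as [j [Hj Hjz]].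
      destruct (classic (P j o)) as [Hjo|Hjo].
      - left. rewrite (piece_cdist_q j z o); auto. apply Rmult_le_compat_l; [lra|].
        apply cdist_le_diam_sub; auto; [exists z | exists o]; auto.
      - right. apply Rnot_lt_le. intro Hd. apply Hjo. eapply He0P; eauto. }
    assert (Hclose := connectedC_dist_gap T o (r * diam (img q T)) e0 HT To
      ltac:(apply Rmult_le_pos; lra) ltac:(lra) Hgap).
    apply diam_le; [nra|]. intros u v Hu Hv.
    pose proof (cdist_triangle u o v). rewrite (cdist_sym o v) in H1.
    pose proof (Hclose u Hu). pose proof (Hclose v Hv). lra.
Qed.

Section Return.

Variable dr : R.
Hypothesis HdrP : forall o, O o -> forall k, (1 <= k)%nat -> dr <= cdist (iterf k q o) o.

Lemma overlap_visited_once T j k o : (forall z, T z -> A z) -> O o -> (j < k)%nat ->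
  img (iterf j q) T o -> img (iterf k q) T o -> dr <= diam (img (iterf k q) T).
Proof.
  intros TA Ho Hjk [z [Tz Hzo]] Hk.
  assert (Hret : img (iterf k q) T (iterf (k - j) q o)).
  { exists z. split; auto. rewrite Hzo. unfold iterf. rewrite <- Nat.iter_add. f_equal. lia. }
  pose proof (HdrP o Ho (k - j)%nat ltac:(lia)).
  pose proof (cdist_le_diam_sub _ _ _ (img_iterf_incl A T q q_maps_attractor TA k) Hret Hk).
  lra.
Qed.

(* Each step distorts by at most 2, and only when a new overlap point is met. *)
Lemma diam_iter_distortion T n : (forall z, T z -> A z) -> connectedC T ->
  (forall i, (i < n)%nat -> diam (img (iterf i q) T) < e0 /\ diam (img (iterf i q) T) < dr) ->
  diam T * (/ r) ^ n <= 2 ^ length l * diam (img (iterf n q) T) /\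
  diam (img (iterf n q) T) <= 2 ^ length l * (/ r) ^ n * diam T.
Proof.
  intros TA HT Hsmall.
  set (s := fun k => diam (img (iterf k q) T)).
  set (visited := fun k o => exists j, (j < k)%nat /\ img (iterf j q) T o).
  assert (TkA := img_iterf_incl A T q q_maps_attractor TA).
  assert (Hs0 : s 0%nat = diam T) by (apply diam_ext, img_iterf_O).
  assert (HsS : forall k, diam (img q (img (iterf k q) T)) = s (S k))
    by (intro k; apply diam_ext; intro z; symmetry; apply img_iterf_S).
  destruct (pow2_distortion s (fun k => count_sat (visited k) l) (/ r) n) as [Hlow Hup].
  - apply Rlt_le, Rinv_0_lt_compat, Hr0.
  - intro k. apply diam_ge0_sub, TkA.
  - intros k Hk. destruct (Hsmall k Hk) as [He Hd].
    assert (Hmono : forall o, visited k o -> visited (S k) o)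
      by (intros o [j [Hj Ho]]; exists j; split; [lia | auto]).
    destruct (diam_q_step (img (iterf k q) T) (TkA k)
      (connectedC_img_iterf A T q q_maps_attractor q_continuous TA HT k) He)
      as [Heq|[o [Ho [To [Hb1 Hb2]]]]]; rewrite HsS in *; change (diam (img (iterf k q) T)) with (s k) in *.
    + exists 0%nat. split; [pose proof (count_sat_mono _ _ l Hmono); lia|].
      apply ratio_bounds_div; [exact Hr0 | |]; simpl; lra.
    + exists 1%nat. split.
      * assert (Hnew : ~ visited k o).
        { intros [j [Hj Hjo]].
          pose proof (overlap_visited_once T j k o TA Ho Hj Hjo To) as Hvis.
          change (dr <= s k) in Hvis. lra. }
        pose proof (count_sat_lt (visited k) (visited (S k)) l o Hmono (proj1 (Hl o) Ho)
          (ex_intro _ k (conj (Nat.lt_succ_diag_r k) To)) Hnew). lia.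
      * rewrite pow_1. apply ratio_bounds_div; [exact Hr0 | |]; lra.
  - rewrite Hs0 in Hlow, Hup.
    change (s n) with (diam (img (iterf n q) T)) in Hlow, Hup.
    assert (Hcount : 2 ^ count_sat (visited n) l <= 2 ^ length l)
      by (apply Rle_pow; [lra | apply count_sat_le_length]).
    pose proof (diam_ge0_sub _ (TkA n)). pose proof (diam_ge0_sub T TA).
    pose proof (pow_le (/ r) n (Rlt_le _ _ (Rinv_0_lt_compat _ Hr0))).
    assert (0 <= (/ r) ^ n * diam T) by (apply Rmult_le_pos; auto).
    rewrite !Rmult_assoc in Hup |- *. split; nra.
Qed.

Lemma orbit_small_back_step T n i delta : (forall z, T z -> A z) -> connectedC T ->
  0 < delta -> delta <= e0 / 2 -> delta <= dr -> (i < n)%nat ->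
  diam (img (iterf n q) T) < delta / 2 ^ (length l + 1) ->
  (forall j, (i < j <= n)%nat -> diam (img (iterf j q) T) < delta / 2) ->
  diam (img (iterf i q) T) < delta / 2.
Proof.
  intros TA HT Hdelta He0d Hdrd Hin Hn Hlater.
  assert (TkA := img_iterf_incl A T q q_maps_attractor TA).
  assert (TkC := connectedC_img_iterf A T q q_maps_attractor q_continuous TA HT).
  assert (Hadd : forall j, diam (img (iterf j q) (img (iterf i q) T))
                         = diam (img (iterf (j + i) q) T))
    by (intro j; apply diam_ext; intro z; apply img_iterf_add).
  assert (Hnext := Hlater (S i) ltac:(lia)).
  pose proof (diam_ge0_sub _ (TkA (S i))).
  assert (HqS : diam (img q (img (iterf i q) T)) = diam (img (iterf (S i) q) T))
    by (apply diam_ext; intro z; symmetry; apply img_iterf_S).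
  assert (Hi : diam (img (iterf i q) T) < delta).
  { pose proof (diam_le_of_small_q_image (img (iterf i q) T) (TkA i) (TkC i)) as Hback.
    rewrite HqS in Hback. assert (r * diam (img (iterf (S i) q) T) <= diam (img (iterf (S i) q) T))
      by nra. lra. }
  destruct (diam_iter_distortion (img (iterf i q) T) (n - i) (TkA i) (TkC i)) as [Hlow _].
  - intros j Hj. rewrite Hadd. destruct j as [|j]; [simpl; lra|].
    specialize (Hlater (S j + i)%nat ltac:(lia)). lra.
  - rewrite Hadd, Nat.sub_add in Hlow by lia.
    assert (Hpow : 2 ^ length l * (delta / 2 ^ (length l + 1)) = delta / 2)
      by (rewrite pow_add; field; apply pow_nonzero; lra).
    pose proof (pow_R1_Rle (/ r) (n - i)
      ltac:(rewrite <- Rinv_1; apply Rinv_le_contravar; lra)).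
    pose proof (diam_ge0_sub _ (TkA i)). pose proof (pow_lt 2 (length l)).
    nra.
Qed.

Lemma orbit_small_of_image_small T n delta : (forall z, T z -> A z) -> connectedC T ->
  0 < delta -> delta <= e0 / 2 -> delta <= dr ->
  diam (img (iterf n q) T) < delta / 2 ^ (length l + 1) ->
  forall i, (i <= n)%nat -> diam (img (iterf i q) T) < delta / 2.
Proof.
  intros TA HT Hdelta He0d Hdrd Hn i Hi.
  remember (n - i)%nat as t eqn:Ht. revert i Hi Ht.
  induction t as [t IH] using lt_wf_ind. intros i Hi Ht.
  destruct (Nat.eq_dec i n) as [->|Hin].
  - apply Rlt_le_trans with (1 := Hn). unfold Rdiv. apply Rmult_le_compat_l; [lra|].
    apply Rinv_le_contravar; [lra|]. rewrite pow_add.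
    pose proof (pow_R1_Rle 2 (length l)). simpl. lra.
  - apply (orbit_small_back_step T n i delta); auto; [lia|].
    intros j Hj. apply (IH (n - j)%nat); lia.
Qed.

Lemma orbit_small_of_scaled_small T n delta : (forall z, T z -> A z) -> connectedC T ->
  0 < delta -> delta <= e0 / 2 -> delta <= dr ->
  (/ r) ^ n * diam T < delta / 2 ^ (length l + 1) ->
  forall i, (i <= n)%nat -> diam (img (iterf i q) T) < delta / 2.
Proof.
  intros TA HT Hdelta He0d Hdrd Hn i.
  induction i as [i IH] using lt_wf_ind. intro Hi.
  destruct (diam_iter_distortion T i TA HT) as [_ Hup].
  - intros j Hj. specialize (IH j Hj ltac:(lia)). lra.
  - assert (Hpow : 2 ^ length l * (delta / 2 ^ (length l + 1)) = delta / 2)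
      by (rewrite pow_add; field; apply pow_nonzero; lra).
    assert ((/ r) ^ i <= (/ r) ^ n).
    { apply Rle_pow; [|exact Hi]. rewrite <- Rinv_1. apply Rinv_le_contravar; lra. }
    pose proof (diam_ge0_sub T TA). pose proof (pow_lt 2 (length l)).
    assert ((/ r) ^ i * diam T <= (/ r) ^ n * diam T) by (apply Rmult_le_compat_r; auto).
    nra.
Qed.

End Return.

End Gap.

Lemma bounded_distortion : exists K delta1, 1 <= K /\ 0 < delta1 /\
  forall (T : C -> Prop) (n : nat), (forall z, T z -> A z) -> connectedC T ->
    (diam (img (iterf n q) T) < delta1 \/ (/ r) ^ n * diam T < delta1) ->
    / K * (/ r) ^ n * diam T <= diam (img (iterf n q) T) /\
    diam (img (iterf n q) T) <= K * (/ r) ^ n * diam T.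
Proof.
  destruct overlap_piece_gap as [e0 [He0 He0P]].
  destruct overlap_return_gap as [dr [Hdr HdrP]].
  set (delta := Rmin (e0 / 2) dr).
  assert (Hdelta : 0 < delta) by (apply Rmin_case; lra).
  assert (He0d : delta <= e0 / 2) by apply Rmin_l.
  assert (Hdrd : delta <= dr) by apply Rmin_r.
  pose proof (pow_R1_Rle 2 (length l) ltac:(lra)).
  exists (2 ^ length l), (delta / 2 ^ (length l + 1)).
  split; [lra|]. split; [apply Rdiv_lt_0_compat; [|apply pow_lt]; lra|].
  intros T n TA HT Hsmall_end.
  assert (Hsmall : forall i, (i <= n)%nat -> diam (img (iterf i q) T) < delta / 2).
  { destruct Hsmall_end as [Hend|Hstart].
    - exact (orbit_small_of_image_small e0 He0 He0P dr HdrP T n delta TA HT Hdelta He0d Hdrd Hend).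
    - exact (orbit_small_of_scaled_small e0 He0P dr HdrP T n delta TA HT Hdelta He0d Hdrd Hstart). }
  destruct (diam_iter_distortion e0 He0P dr HdrP T n TA HT) as [Hlow Hup].
  - intros i Hi. specialize (Hsmall i ltac:(lia)). split; lra.
  - split; [|exact Hup].
    apply Rmult_le_reg_l with (2 ^ length l); [lra|].
    replace (2 ^ length l * (/ 2 ^ length l * (/ r) ^ n * diam T))
      with (diam T * (/ r) ^ n) by (field; lra).
    exact Hlow.
Qed.

End IFS.

Theorem lemma3p4 (m : nat) (r : R) (th : nat -> R) (cj : nat -> bool)
  (d : nat -> C) (A : C -> Prop) (q : C -> C) :
  (2 <= m)%nat -> 0 < r -> r < 1 ->
  is_attractor m r th cj d A -> connectedC A ->
  inverse_map m r th cj d A q ->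
  (exists l : list C, forall z, overlap m r th cj d A z <-> In z l) ->
  (exists z, overlap m r th cj d A z) ->
  crit_nonrec (overlap m r th cj d A) q ->
  exists K delta1, 1 <= K /\ 0 < delta1 /\
    forall (S : C -> Prop) (n : nat),
      (forall z, S z -> A z) -> connectedC S ->
      (diam (img (iterf n q) S) < delta1 \/ (/ r) ^ n * diam S < delta1) ->
      / K * (/ r) ^ n * diam S <= diam (img (iterf n q) S) /\
      diam (img (iterf n q) S) <= K * (/ r) ^ n * diam S.
Proof.
  intros Hm Hr0 Hr1 Hatt _ Hinv [l Hl] _ Hcnr.
  exact (bounded_distortion m r th cj d A q l Hm Hr0 Hr1 Hatt Hinv Hl Hcnr).
Qed.
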